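(* Let $(X,d)$ be a bounded metric space, let $S(X)$ be its Samuel compactification with compact topology $\tau$, and define on $S(X)$ the metric $\partial(a,b)=\sup\{|f(a)-f(b)| : f\in\mathrm{Lip}_1(X)\}$. Then every $\tau$-convergent sequence in $S(X)$ is $\partial$-convergent.
   Context: $S(X)$ is the compactification of $X$ associated with the algebra of bounded uniformly continuous real functions on $(X,d)$: it is a compact Hausdorff space containing a dense image of $X$ such that every bounded uniformly continuous $f\colon X\to\mathbb R$ extends uniquely to a continuous function on $S(X)$ (concretely, the closure of the image of $X$ in $\prod_f \overline{f(X)}$ under $x\mapsto (f(x))_f$). $\mathrm{Lip}_1(X)$ is the set of bounded $1$-Lipschitz functions $X\to\mathbb R$, each identified with its continuous extension to $S(X)$. The triple $(S(X),\tau,\partial)$ is a compact topometric space: the $\partial$-topology refines $\tau$ and $\partial$ is $\tau$-lower semicontinuous. *)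

From HB Require Import structures.
From mathcomp Require Import all_boot all_order all_algebra.
From mathcomp Require Import all_classical all_reals all_analysis.
Set Implicit Arguments. Unset Strict Implicit. Unset Printing Implicit Defensive.
Import Order.TTheory GRing.Theory Num.Theory.
Import numFieldNormedType.Exports.
Local Open Scope classical_set_scope.
Local Open Scope ring_scope.

Section Samuel.
Variables (R : realType) (X : Type) (d : X -> X -> R).

Definition is_metric : Prop :=
  [/\ forall x y, 0 <= d x y,
      forall x y, d x y = 0 <-> x = y,
      forall x y, d x y = d y x &
      forall x y z, d x z <= d x y + d y z].

Definition metric_bounded : Prop := exists M : R, forall x y, d x y <= M.

Definition fun_bounded (f : X -> R) : Prop := exists M : R, forall x, `|f x| <= M.

Definition unif_cont (f : X -> R) : Prop :=
  forall e : R, 0 < e -> exists2 delta : R, 0 < delta &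
    forall x y, d x y < delta -> `|f x - f y| < e.

Definition is_buc (f : X -> R) : Prop := fun_bounded f /\ unif_cont f.

Definition BUC := {f : X -> R | is_buc f}.

Definition is_lip1 (f : X -> R) : Prop :=
  fun_bounded f /\ forall x y, `|f x - f y| <= d x y.

Lemma lip1_buc f : is_lip1 f -> is_buc f.
Proof.
move=> [fb fl]; split => // e e0; exists e => // x y dxy.
exact: le_lt_trans (fl x y) dxy.
Qed.

Definition samuel_emb (x : X) : {ptws BUC -> R} := fun f => proj1_sig f x.

(* Points of S(X) are families (a_f)_f, and
   the continuous extension of f to S(X) is the coordinate a |-> a_f. *)
Definition samuel : set {ptws BUC -> R} := closure (range samuel_emb).

Definition lip1_ext (f : X -> R) (hf : is_lip1 f) (a : {ptws BUC -> R}) : R :=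
  a (exist _ f (lip1_buc hf)).

Definition samuel_dist (a b : {ptws BUC -> R}) : R :=
  sup [set r : R | exists f (hf : is_lip1 f), r = `|lip1_ext hf a - lip1_ext hf b| ].

End Samuel.

Arguments samuel {R X} d _.
Arguments samuel_dist {R X} d _ _.
Arguments samuel_emb {R X} d _ _.

(* If p_n -> q were not uniform on Lip_1(X), one could choose indices n_k >= k
   and 1-Lipschitz f_k with |p_{n_k}(f_k) - q(f_k)| > 4e while p_{n_k} is
   e-close to q at f_0, ..., f_{k-1}.  As p_{n_k} lies in the closure of X, the
   region W_k of points x with |f_j(x) - p_{n_k}(f_j)| < e for all j <= k is
   nonempty, and for j < k the function f_j keeps W_j and W_k more than e apart.
   The distance G to the union of the odd-indexed regions is then a bounded
   1-Lipschitz function vanishing on odd regions and >= e on even ones, so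
   p_{n_k}(G) oscillates, contradicting p_n(G) -> q(G).  Uniform closeness on
   Lip_1(X) bounds partial(p_n, q). *)

From HB Require Import structures.
From mathcomp Require Import all_boot all_order all_algebra.
From mathcomp Require Import all_classical all_reals all_analysis.
From mathcomp Require Import lra.

Import Order.TTheory GRing.Theory Num.Theory.
Import numFieldNormedType.Exports.
Local Open Scope classical_set_scope.
Local Open Scope ring_scope.

Section PointwiseTopology.
Context {R : realType} {B : Type}.

Lemma coord_continuous (b : B) : continuous (fun z : {ptws B -> R} => z b).
Proof.
(* [proj_continuous] wants an eqType of indices; [{classic B}] supplies one
   without changing the product topology. *)
exact: (@proj_continuous {classic B} (fun=> R) b).
Qed.

Lemma near_coord (a : {ptws B -> R}) (b : B) (e : R) :
  0 < e -> \forall z \near a, `|z b - a b| < e.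
Proof.
move=> e0; apply: filterS (cvgr_dist_lt _ _ (coord_continuous b a) _ e0) => z.
by rewrite distrC.
Qed.

Lemma cvg_near_coord {T} {F : set_system T} {FF : Filter F}
    {u : T -> {ptws B -> R}} {a : {ptws B -> R}} (b : B) {e : R} :
  u @ F --> a -> 0 < e -> \forall t \near F, `|u t b - a b| < e.
Proof.
move=> ua e0; have ub : (fun t => u t b) @ F --> a b.
  exact: continuous_cvg (coord_continuous b a) ua.
by apply: filterS (cvgr_dist_lt _ _ ub _ e0) => t; rewrite distrC.
Qed.

End PointwiseTopology.

Lemma near_forall_lt {T} {F : set_system T} {FF : Filter F} (P : nat -> T -> Prop) k :
  (forall j, (j < k)%N -> \forall t \near F, P j t) ->
  \forall t \near F, forall j, (j < k)%N -> P j t.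
Proof.
move=> nearP; have /filter_forall : forall j : 'I_k, \forall t \near F, P j t.
  by move=> j; exact: nearP.
by apply: filterS => t Pt j jk; exact: (Pt (Ordinal jk)).
Qed.

Lemma dependent_choice_seq (T : Type) (P : seq T -> T -> Prop) :
  (forall s, exists t, P s t) -> exists f : nat -> T, forall k, P (mkseq f k) (f k).
Proof.
move=> /choice[next nextP].
pose hist k := iter k (fun s => rcons s (next s)) [::].
exists (fun k => next (hist k)) => k.
suff -> : mkseq (fun k => next (hist k)) k = hist k by [].
by elim: k => //= k IH; rewrite mkseqS IH.
Qed.

Section DistanceToSet.
Context {R : realType} {X : Type} (d : X -> X -> R).
Hypothesis hd : is_metric d.

Definition dist_to (A : set X) (x : X) : R := inf [set d x y | y in A].

Context {A : set X}.
Hypothesis A0 : A !=set0.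

Lemma dist_to_le x {y} : A y -> dist_to A x <= d x y.
Proof.
case: hd => d_ge0 _ _ _ Ay; apply: ge_inf; last by exists y.
by exists 0 => _ [z _ <-].
Qed.

Lemma dist_to_ge x r : (forall y, A y -> r <= d x y) -> r <= dist_to A x.
Proof.
move=> rle; apply: lb_le_inf => [|_ [y Ay <-]]; last exact: rle.
by case: A0 => y Ay; exists (d x y), y.
Qed.

Lemma dist_to_eq0 x : A x -> dist_to A x = 0.
Proof.
case: hd => d_ge0 d_eq0 _ _ Ax; apply/eqP; rewrite eq_le.
rewrite -[X in _ <= X](proj2 (d_eq0 x x) erefl) dist_to_le //=.
by apply: dist_to_ge.
Qed.

Lemma dist_to_lip x y : `|dist_to A x - dist_to A y| <= d x y.
Proof.
case: hd => _ _ dC dT.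
have triangle u v : dist_to A u <= d u v + dist_to A v.
  rewrite -lerBlDl; apply: dist_to_ge => z Az; rewrite lerBlDl.
  exact: le_trans (dist_to_le u Az) (dT u v z).
by rewrite ler_norml lerNl opprB !lerBlDr triangle dC triangle.
Qed.

Lemma dist_to_is_lip1 : metric_bounded d -> is_lip1 d (dist_to A).
Proof.
move=> [M dM]; split; last exact: dist_to_lip.
case: A0 => y Ay; exists M => x.
rewrite ger0_norm; first exact: le_trans (dist_to_le x Ay) (dM x y).
by apply: dist_to_ge => z _; case: hd.
Qed.

End DistanceToSet.

Section SamuelDistance.
Context {R : realType} {X : Type} (d : X -> X -> R).

Definition lip1_close (e : R) (a b : {ptws BUC d -> R}) : Prop :=
  forall g : BUC d, is_lip1 d (sval g) -> `|a g - b g| <= e.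

Lemma samuel_approx {a : {ptws BUC d -> R}} {P : set {ptws BUC d -> R}} :
  samuel d a -> (\forall z \near a, P z) -> exists x, P (samuel_emb d x).
Proof. by move=> aS /aS [_ [[x _ <-] Px]]; exists x. Qed.

Lemma samuel_dist_le {a b : {ptws BUC d -> R}} {e : R} :
  (forall x y, 0 <= d x y) -> lip1_close e a b -> 0 <= samuel_dist d a b <= e.
Proof.
move=> d_ge0 close; rewrite /samuel_dist; set S := [set r : R | _].
have lip0 : is_lip1 d (fun=> 0 : R).
  by split; [exists 0 => x | move=> x y]; rewrite ?subrr normr0.
have S0 : S `|lip1_ext lip0 a - lip1_ext lip0 b| by exists (fun=> 0), lip0.
have ubS : ubound S e by move=> _ [f [hf ->]]; exact: close.
rewrite ge_sup ?andbT //; last by exists `|lip1_ext lip0 a - lip1_ext lip0 b|.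
exact: le_trans (normr_ge0 _) (ub_le_sup (ex_intro _ e ubS) S0).
Qed.

Lemma far_subsequence {p : nat -> {ptws BUC d -> R}} {q : {ptws BUC d -> R}}
    {eps : R} :
  p @ \oo --> q -> 0 < eps ->
  ~ (\forall n \near \oo, lip1_close (4 * eps) (p n) q) ->
  exists (nk : nat -> nat) (f : nat -> BUC d), forall k,
    [/\ (k <= nk k)%N, is_lip1 d (sval (f k)),
        4 * eps < `|p (nk k) (f k) - q (f k)|
      & forall j, (j < k)%N -> `|p (nk k) (f j) - q (f j)| < eps].
Proof.
move=> pq eps0 not_close.
(* [tnth] rather than [nth]: [BUC d] has no default element at hand. *)
pose gap (s : seq (nat * BUC d)) n i :=
  `|p n (tnth (in_tuple s) i).2 - q (tnth (in_tuple s) i).2|.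
pose P s (t : nat * BUC d) :=
  [/\ (size s <= t.1)%N, is_lip1 d (sval t.2), 4 * eps < `|p t.1 t.2 - q t.2|
    & forall i, gap s t.1 i < eps].
have [nf nfP] : exists nf, forall k, P (mkseq nf k) (nf k).
  apply: dependent_choice_seq => s.
  have near_s : \forall n \near \oo, (size s <= n)%N /\ forall i, gap s n i < eps.
    apply: filterI; first exact: nbhs_infty_ge.
    apply: (@filter_forall _ _ (fun i n => gap s n i < eps) \oo) => i.
    exact: cvg_near_coord.
  have [n [[sn near_n] far_n]] : exists n,
      ((size s <= n)%N /\ forall i, gap s n i < eps) /\
      ~ lip1_close (4 * eps) (p n) q.
    apply: contra_notP not_close => all_close; apply: filterS near_s => n sn.
    by apply: contrapT => far_n; apply: all_close; exists n.
  move: far_n => /existsNP[g /not_implyP[g_lip /negP]]; rewrite -ltNge => g_far.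
  by exists (n, g); split.
exists (fun k => (nf k).1), (fun k => (nf k).2) => k.
have [sk nf_lip nf_far nf_near] := nfP k.
split=> //; first by rewrite size_mkseq in sk.
move=> j jk; have jk' : (j < size (mkseq nf k))%N by rewrite size_mkseq.
by have := nf_near (Ordinal jk'); rewrite /gap (tnth_nth (nf 0%N)) /= nth_mkseq.
Qed.

End SamuelDistance.

Section OscillatingCoordinate.
Context {R : realType} {X : Type} {d : X -> X -> R}.
Hypotheses (hd : is_metric d) (hb : metric_bounded d).
Context {p : nat -> {ptws BUC d -> R}} {q : {ptws BUC d -> R}} {eps : R}.
Context {f : nat -> BUC d}.
Hypotheses (p_samuel : forall n, samuel d (p n)) (eps0 : 0 < eps).
Hypothesis f_lip : forall k, is_lip1 d (sval (f k)).
Hypothesis f_far : forall k, 4 * eps < `|p k (f k) - q (f k)|.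
Hypothesis f_near : forall j k, (j < k)%N -> `|p k (f j) - q (f j)| < eps.

Definition region k x := forall j, (j <= k)%N -> `|sval (f j) x - p k (f j)| < eps.

Lemma region_sep {j k x y} : (j < k)%N -> region j x -> region k y -> eps < d x y.
Proof.
move=> jk /(_ j (leqnn j)) x_near /(_ j (ltnW jk)) y_near.
set a := sval (f j) x in x_near *; set b := sval (f j) y in y_near *.
have chain : `|p j (f j) - q (f j)| <=
    `|a - p j (f j)| + `|a - b| + `|b - p k (f j)| + `|p k (f j) - q (f j)|.
  rewrite (distrC a) -!addrA; apply: le_trans (ler_distD a _ _) _; rewrite lerD2l.
  apply: le_trans (ler_distD b _ _) _; rewrite lerD2l.
  exact: ler_distD.
have sum_lt : `|a - p j (f j)| + `|a - b| + `|b - p k (f j)| + `|p k (f j) - q (f j)|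
    < eps + d x y + eps + eps.
  apply: ltrD (f_near j k jk); apply: ltrD y_near.
  exact: ltr_leD x_near (proj2 (f_lip j) x y).
have := lt_trans (lt_le_trans (f_far j) chain) sum_lt.
lra.
Qed.

Lemma region_approx k (g : BUC d) {r : R} : 0 < r ->
  exists2 x, region k x & `|sval g x - p k g| < r.
Proof.
move=> r0; have pk_filter : Filter (nbhs (p k)) := nbhs_filter (p k).
have near_pk : \forall z \near p k,
    (forall j, (j < k.+1)%N -> `|z (f j) - p k (f j)| < eps) /\ `|z g - p k g| < r.
  apply: filterI; last exact: near_coord.
  apply: (@near_forall_lt _ (nbhs (p k)) _
    (fun j (z : {ptws BUC d -> R}) => `|z (f j) - p k (f j)| < eps) k.+1).
  by move=> j _; exact: near_coord.
by have [x [x_reg x_g]] := samuel_approx d (p_samuel k) near_pk; exists x.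
Qed.

Definition odd_regions := [set x | exists2 k, odd k & region k x].

Lemma odd_regions_nonempty : odd_regions !=set0.
Proof. by have [x x_reg _] := region_approx 1 (f 0%N) ltr01; exists x, 1%N. Qed.

Lemma oscillating_coord : exists g : BUC d, forall k, eps / 2 < p k.*2 g - p k.*2.+1 g.
Proof.
have [_ _ dC _] := hd.
have G_lip := dist_to_is_lip1 d hd odd_regions_nonempty hb.
pose g : BUC d := exist _ _ (lip1_buc G_lip).
exists g => k; have e4 : 0 < eps / 4 by rewrite divr_gt0.
have [x x_reg] := region_approx k.*2.+1 g e4.
have [y y_reg] := region_approx k.*2 g e4.
have Gx : dist_to d odd_regions x = 0.
  by apply: (dist_to_eq0 d hd odd_regions_nonempty); exists k.*2.+1; rewrite /= ?odd_double.
have Gy : eps <= dist_to d odd_regions y.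
  apply: (dist_to_ge d odd_regions_nonempty) => z [j j_odd z_reg].
  have [jk|kj|jk] := ltngtP j k.*2.
  - by rewrite dC; apply/ltW/(region_sep jk).
  - exact/ltW/(region_sep kj).
  - by move: j_odd; rewrite jk odd_double.
rewrite /= Gx sub0r normrN !ltr_norml => /andP[? ?] /andP[? ?].
lra.
Qed.

End OscillatingCoordinate.

Lemma samuel_cvg_lip1_close {R : realType} {X : Type} {d : X -> X -> R}
    {p : nat -> {ptws BUC d -> R}} {q : {ptws BUC d -> R}} {e : R} :
  is_metric d -> metric_bounded d -> (forall n, samuel d (p n)) ->
  p @ \oo --> q -> 0 < e -> \forall n \near \oo, lip1_close d e (p n) q.
Proof.
move=> hd hb p_samuel pq e0; pose eps := e / 4.
have eps0 : 0 < eps by rewrite divr_gt0.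
have -> : e = 4 * eps by rewrite /eps mulrC divfK.
apply: contrapT => not_close.
have [nk [f nkf]] := far_subsequence d pq eps0 not_close.
have [g g_osc] : exists g : BUC d,
    forall k, eps / 2 < p (nk k.*2) g - p (nk k.*2.+1) g.
  apply: (oscillating_coord (p := p \o nk) (q := q) (f := f) hd hb) => //.
  - by move=> n; exact: p_samuel.
  - by move=> k; have [] := nkf k.
  - by move=> k; have [] := nkf k.
  - by move=> j k; have [_ _ _] := nkf k; apply.
have [N _ near_q] := cvg_near_coord g pq (divr_gt0 eps0 (ltr0n _ 4)).
have N_le_2N : (N <= N.*2)%N by rewrite -addnn leq_addr.
have [le_even _ _ _] := nkf N.*2; have [le_odd _ _ _] := nkf N.*2.+1.
have := near_q _ (leq_trans N_le_2N le_even).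
have := near_q _ (leq_trans (leq_trans N_le_2N (leqnSn _)) le_odd).
have := g_osc N; rewrite !ltr_norml => ? /andP[? ?] /andP[? ?].
lra.
Qed.

Theorem mainTheorem20 (R : realType) (X : Type) (d : X -> X -> R)
  (hd : is_metric d) (hb : metric_bounded d)
  (p : nat -> {ptws BUC d -> R}) (q : {ptws BUC d -> R}) :
  (forall n, samuel d (p n)) -> samuel d q ->
  p @ \oo --> q ->
  exists2 r : {ptws BUC d -> R}, samuel d r &
    (fun n => samuel_dist d (p n) r) @ \oo --> (0 : R).
Proof.
move=> p_samuel q_samuel pq; exists q => //.
apply/cvgrPdist_lt => e e0.
have [d_ge0 _ _ _] := hd.
have e2 : 0 < e / 2 by rewrite divr_gt0.
apply: filterS (samuel_cvg_lip1_close hd hb p_samuel pq e2) => n close.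
have /andP[dist_ge0 dist_le] := samuel_dist_le d d_ge0 close.
rewrite sub0r normrN ger0_norm //; apply: le_lt_trans dist_le _.
by rewrite ltr_pdivrMr // ltr_pMr // ltr1n.
Qed.
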